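(* The Hausdorff completion of a co-Heyting algebra $L$ (with respect to its codimetric pseudometric) is compact if and only if $L/dL$ is finite for every positive integer $d$.
   Context: A co-Heyting algebra is a bounded distributive lattice $(L,0,1,\vee,\wedge)$ such that $a-b=\min\{c\in L: a\le b\vee c\}$ exists for all $a,b$. Let $a\triangle b=(a-b)\vee(b-a)$; for an ideal $I$, $L/I$ is the quotient by $a\equiv_I b\iff a\triangle b\in I$. $\operatorname{Spec}L$ is the set of prime filters ordered by inclusion; height = foundation rank there; $\operatorname{codim}_La=\min\{\operatorname{height}\mathfrak p: a\in\mathfrak p\}$ ($+\infty$ if none); $dL=\{a:\operatorname{codim}_La\ge d\}$ is an ideal. The codimetric pseudometric is $\operatorname{dist}_L(a,b)=2^{-\operatorname{codim}_L(a\triangle b)}$ if finite, $0$ otherwise. The Hausdorff completion of a pseudometric space is the completion of its largest Hausdorff (metric) quotient. *)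

From Stdlib Require Import Reals List ClassicalEpsilon.
Open Scope R_scope.

(** Co-Heyting algebra: a bounded distributive lattice (given algebraically)
    together with an operation [cdiff] such that
    [cdiff a b] = min { c | a <= b \/ c }, expressed by the Galois condition
    a <= b \/ c  <->  cdiff a b <= c. Order: x <= y iff x \/ y = y. *)
Record coHeyting := CoHeyting {
  car :> Type;
  bot : car;
  top : car;
  join : car -> car -> car;
  meet : car -> car -> car;
  cdiff : car -> car -> car;
  join_assoc : forall a b c, join a (join b c) = join (join a b) c;
  meet_assoc : forall a b c, meet a (meet b c) = meet (meet a b) c;
  join_comm : forall a b, join a b = join b a;
  meet_comm : forall a b, meet a b = meet b a;
  join_meet_absorb : forall a b, join a (meet a b) = a;
  meet_join_absorb : forall a b, meet a (join a b) = a;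
  meet_join_distr : forall a b c, meet a (join b c) = join (meet a b) (meet a c);
  bot_join : forall a, join bot a = a;
  top_meet : forall a, meet top a = a;
  cdiff_spec : forall a b c,
    join a (join b c) = join b c <-> join (cdiff a b) c = c
}.

Arguments bot {c} : rename.
Arguments top {c} : rename.
Arguments join {c} : rename.
Arguments meet {c} : rename.
Arguments cdiff {c} : rename.

Section CoHeytingDefs.
Variable L : coHeyting.

Definition cle (x y : L) : Prop := join x y = y.

Definition symdiff (a b : L) : L := join (cdiff a b) (cdiff b a).

Definition prime_filter (p : L -> Prop) : Prop :=
  p top /\ ~ p bot /\
  (forall a b, p a -> cle a b -> p b) /\
  (forall a b, p a -> p b -> p (meet a b)) /\
  (forall a b, p (join a b) -> p a \/ p b).

Definition strict_incl (q p : L -> Prop) : Prop :=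
  (forall x, q x -> p x) /\ exists x, p x /\ ~ q x.

(** [height_ge p n] : the foundation rank (height) of [p] in Spec L
    (ordered by inclusion) is at least the natural number [n]. *)
Fixpoint height_ge (p : L -> Prop) (n : nat) : Prop :=
  match n with
  | O => True
  | S m => exists q, prime_filter q /\ strict_incl q p /\ height_ge q m
  end.

(** codim_L a >= d  (min over prime filters containing a; +oo if none) *)
Definition codim_ge (a : L) (d : nat) : Prop :=
  forall p, prime_filter p -> p a -> height_ge p d.

Definition dideal (d : nat) (a : L) : Prop := codim_ge a d.

(** 2^{-codim a} if codim a is finite, 0 otherwise *)
Definition codist (a : L) : R :=
  match excluded_middle_informative
          (exists n, codim_ge a n /\ ~ codim_ge a (S n)) with
  | left H => (/ 2) ^ (proj1_sig (constructive_indefinite_description _ H))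
  | right _ => 0
  end.

Definition cdist (a b : L) : R := codist (symdiff a b).

(** L / dL is finite: finitely many classes of a ≡ b iff a △ b ∈ dL *)
Definition quotient_finite (d : nat) : Prop :=
  exists s : list L, forall a, exists b, In b s /\ dideal d (symdiff a b).

End CoHeytingDefs.

Definition is_metric {Y : Type} (dY : Y -> Y -> R) : Prop :=
  (forall x y, dY x y = 0 <-> x = y) /\
  (forall x y, dY x y = dY y x) /\
  (forall x y z, dY x z <= dY x y + dY y z).

Definition cauchy_seq {Y : Type} (dY : Y -> Y -> R) (u : nat -> Y) : Prop :=
  forall e, 0 < e -> exists N, forall m n, (N <= m)%nat -> (N <= n)%nat ->
    dY (u m) (u n) < e.

Definition converges_to {Y : Type} (dY : Y -> Y -> R) (u : nat -> Y) (y : Y) : Prop :=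
  forall e, 0 < e -> exists N, forall n, (N <= n)%nat -> dY (u n) y < e.

Definition metric_complete {Y : Type} (dY : Y -> Y -> R) : Prop :=
  forall u, cauchy_seq dY u -> exists y, converges_to dY u y.

Definition metric_open {Y : Type} (dY : Y -> Y -> R) (U : Y -> Prop) : Prop :=
  forall y, U y -> exists e, 0 < e /\ forall z, dY y z < e -> U z.

Definition metric_compact {Y : Type} (dY : Y -> Y -> R) : Prop :=
  forall (I : Type) (U : I -> Y -> Prop),
    (forall i, metric_open dY (U i)) ->
    (forall y, exists i, U i y) ->
    exists s : list I, forall y, exists i, In i s /\ U i y.

(** (Y, dY) together with f : L -> Y is a Hausdorff completion of the
    pseudometric space (L, cdist): Y is a complete metric space and f is a
    distance-preserving map with dense image (this characterizes the
    completion of the metric quotient of L up to isometry). *)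
Definition is_hausdorff_completion (L : coHeyting) (Y : Type)
    (dY : Y -> Y -> R) (f : L -> Y) : Prop :=
  is_metric dY /\ metric_complete dY /\
  (forall a b, dY (f a) (f b) = cdist L a b) /\
  (forall y e, 0 < e -> exists a, dY y (f a) < e).

From Stdlib Require Import Reals List Lra Lia Classical ClassicalEpsilon.
Open Scope R_scope.

(* The codimetric ball of radius 2^-d around a is the dL-class of a, so the
   pseudometric space L is totally bounded iff every L/dL is finite.  Its
   completion, being complete, is compact iff it is totally bounded, and a
   dense isometric image of L is totally bounded iff L is. *)

Lemma pow_half_pos (n : nat) : 0 < (/2)^n.
Proof. apply pow_lt; lra. Qed.

Lemma pow_half_le (m n : nat) : (m <= n)%nat -> (/2)^n <= (/2)^m.
Proof.
  intros Hmn. rewrite !pow_inv. apply Rinv_le_contravar.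
  - apply pow_lt; lra.
  - apply Rle_pow; [lra | exact Hmn].
Qed.

Lemma pow_half_lt_ex (e : R) : 0 < e -> exists k, (/2)^k < e.
Proof.
  intros He. destruct (pow_lt_1_zero (/2)) with (y := e) as [N HN].
  - rewrite Rabs_right; lra.
  - exact He.
  - exists N. specialize (HN N (le_n N)).
    rewrite Rabs_right in HN; [exact HN | left; apply pow_half_pos].
Qed.

Section Codimension.
Variable L : coHeyting.

Lemma height_ge_pred (p : L -> Prop) (n : nat) :
  height_ge L p (S n) -> height_ge L p n.
Proof.
  revert p; induction n as [|n IH]; intros p Hp; [exact I|].
  destruct Hp as [q [Hq [Hqp Hh]]]. exists q. auto.
Qed.

Lemma codim_ge_le (x : L) (m n : nat) :
  (m <= n)%nat -> codim_ge L x n -> codim_ge L x m.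
Proof.
  induction 1 as [|n _ IH]; [auto|]. intros Hx. apply IH.
  intros p Hp Hpx. apply height_ge_pred, Hx; assumption.
Qed.

Lemma codim_ge_infinite (x : L) :
  ~ (exists n, codim_ge L x n /\ ~ codim_ge L x (S n)) ->
  forall n, codim_ge L x n.
Proof.
  intros Hfin n; induction n as [|n IH].
  - intros p _ _; exact I.
  - apply NNPP; intros Hn; apply Hfin; eauto.
Qed.

Lemma codim_ge_of_codist_lt (x : L) (d : nat) :
  codist L x < (/2)^d -> codim_ge L x d.
Proof.
  unfold codist. destruct excluded_middle_informative as [Hfin|Hinf].
  - destruct (constructive_indefinite_description _ Hfin) as [n [Hn Hn_max]]; simpl.
    intros Hlt. destruct (Compare_dec.le_lt_dec n d) as [Hnd|Hdn].
    + pose proof (pow_half_le _ _ Hnd). lra.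
    + apply (codim_ge_le x d n); [lia | exact Hn].
  - intros _. apply codim_ge_infinite; exact Hinf.
Qed.

Lemma codist_le_of_codim_ge (x : L) (d : nat) :
  codim_ge L x d -> codist L x <= (/2)^d.
Proof.
  intros Hd. unfold codist. destruct excluded_middle_informative as [Hfin|_].
  - destruct (constructive_indefinite_description _ Hfin) as [n [Hn_min Hn]]; simpl.
    destruct (Compare_dec.le_lt_dec d n) as [Hdn|Hnd].
    + apply pow_half_le; exact Hdn.
    + exfalso; apply Hn. apply (codim_ge_le x (S n) d); [lia | exact Hd].
  - left; apply pow_half_pos.
Qed.

Lemma dideal_of_cdist_lt (a b : L) (d : nat) :
  cdist L a b < (/2)^d -> dideal L d (symdiff L a b).
Proof. apply codim_ge_of_codist_lt. Qed.

Lemma cdist_le_of_dideal (a b : L) (d : nat) :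
  dideal L d (symdiff L a b) -> cdist L a b <= (/2)^d.
Proof. apply codist_le_of_codim_ge. Qed.

End Codimension.

Definition totally_bounded {Y : Type} (dY : Y -> Y -> R) : Prop :=
  forall r, 0 < r -> exists cs : list Y, forall y, exists c, In c cs /\ dY y c < r.

Section MetricSpace.
Variables (Y : Type) (dY : Y -> Y -> R).
Hypothesis dY_metric : is_metric dY.

Lemma dY_sym (x y : Y) : dY x y = dY y x.
Proof. apply dY_metric. Qed.

Lemma dY_triangle (x y z : Y) : dY x z <= dY x y + dY y z.
Proof. apply dY_metric. Qed.

Lemma ball_open (c : Y) (r : R) : metric_open dY (fun y => dY y c < r).
Proof.
  intros y Hy. exists (r - dY y c). split; [lra|].
  intros z Hz. pose proof (dY_triangle z y c). rewrite (dY_sym z y) in H. lra.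
Qed.

Section DenseImage.
Variables (X : Type) (f : X -> Y).
Hypothesis f_dense : forall y e, 0 < e -> exists a, dY y (f a) < e.

Lemma compact_dense_net : metric_compact dY ->
  forall r, 0 < r -> exists s : list X, forall y, exists b, In b s /\ dY y (f b) < r.
Proof.
  intros Hcomp r Hr.
  apply (Hcomp X (fun b y => dY y (f b) < r)).
  - intros b; apply ball_open.
  - intros y; exact (f_dense y r Hr).
Qed.

Lemma dense_net_totally_bounded :
  (forall r, 0 < r -> exists s : list X,
     forall a, exists b, In b s /\ dY (f a) (f b) < r) ->
  totally_bounded dY.
Proof.
  intros Hnet r Hr. destruct (Hnet (r/2)) as [s Hs]; [lra|].
  exists (map f s). intros y.
  destruct (f_dense y (r/2)) as [a Ha]; [lra|].
  destruct (Hs a) as [b [Hb Hab]].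
  exists (f b). split; [apply in_map; exact Hb|].
  pose proof (dY_triangle y (f a) (f b)). lra.
Qed.

End DenseImage.

Section FiniteSubcover.
Hypothesis dY_complete : metric_complete dY.
Hypothesis dY_totally_bounded : totally_bounded dY.
Hypothesis Y_inhabited : inhabited Y.
Variables (J : Type) (U : J -> Y -> Prop).
Hypothesis U_open : forall i, metric_open dY (U i).
Hypothesis U_cover : forall y, exists i, U i y.

Definition finitely_covered (A : Y -> Prop) : Prop :=
  exists s : list J, forall y, A y -> exists i, In i s /\ U i y.

Lemma finitely_covered_balls (A : Y -> Prop) (r : R) (cs : list Y) :
  (forall c, finitely_covered (fun y => A y /\ dY y c < r)) ->
  finitely_covered (fun y => A y /\ exists c, In c cs /\ dY y c < r).
Proof.
  intros Hballs. induction cs as [|c cs [s1 Hs1]].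
  - exists nil. intros y [_ [c [[] _]]].
  - destruct (Hballs c) as [s2 Hs2]. exists (s1 ++ s2).
    intros y [Ay [c' [[<-|Hin] Hd]]].
    + destruct (Hs2 y (conj Ay Hd)) as [i [Hi Ui]].
      exists i; split; [apply in_or_app; auto | exact Ui].
    + destruct (Hs1 y (conj Ay (ex_intro _ c' (conj Hin Hd)))) as [i [Hi Ui]].
      exists i; split; [apply in_or_app; auto | exact Ui].
Qed.

Lemma uncovered_ball (A : Y -> Prop) (r : R) : 0 < r ->
  ~ finitely_covered A -> exists c, ~ finitely_covered (fun y => A y /\ dY y c < r).
Proof.
  intros Hr HA. destruct (dY_totally_bounded r Hr) as [cs Hcs].
  apply NNPP; intros Hall. apply HA.
  destruct (finitely_covered_balls A r cs) as [s Hs].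
  - intros c. apply NNPP; intros Hc; apply Hall; eauto.
  - exists s. intros y Ay. apply Hs. split; [exact Ay | apply Hcs].
Qed.

Definition refine_center (A : Y -> Prop) (k : nat) : Y :=
  epsilon Y_inhabited (fun c =>
    ~ finitely_covered A -> ~ finitely_covered (fun y => A y /\ dY y c < (/2)^k)).

Lemma refine_center_spec (A : Y -> Prop) (k : nat) : ~ finitely_covered A ->
  ~ finitely_covered (fun y => A y /\ dY y (refine_center A k) < (/2)^k).
Proof.
  unfold refine_center. apply epsilon_spec.
  destruct (classic (finitely_covered A)) as [HA|HA].
  - destruct Y_inhabited as [y0]. exists y0; tauto.
  - destruct (uncovered_ball A ((/2)^k) (pow_half_pos k) HA) as [c Hc].
    exists c; auto.
Qed.

Fixpoint shrink (k : nat) : Y -> Prop :=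
  match k with
  | O => fun _ => True
  | S k => fun y => shrink k y /\ dY y (refine_center (shrink k) k) < (/2)^k
  end.

Lemma shrink_uncovered : ~ finitely_covered (fun _ => True) ->
  forall k, ~ finitely_covered (shrink k).
Proof. intros H0 k; induction k; [exact H0 | apply refine_center_spec; exact IHk]. Qed.

Lemma shrink_antitone (k m : nat) : (k <= m)%nat -> forall y, shrink m y -> shrink k y.
Proof. induction 1; [auto|]. intros y [Hy _]; auto. Qed.

Lemma shrink_center (k m : nat) (y : Y) : (S k <= m)%nat -> shrink m y ->
  dY y (refine_center (shrink k) k) < (/2)^k.
Proof. intros Hkm Hy. apply (shrink_antitone _ _ Hkm) in Hy. apply Hy. Qed.

Lemma finite_subcover : exists s : list J, forall y, exists i, In i s /\ U i y.
Proof.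
  apply NNPP; intros Hnone.
  assert (Huncov : ~ finitely_covered (fun _ => True)).
  { intros [s Hs]; apply Hnone; exists s; intros y; apply Hs; exact I. }
  set (x := fun k => epsilon Y_inhabited (shrink k)).
  assert (Hx : forall k, shrink k (x k)).
  { intros k. apply epsilon_spec. apply NNPP; intros Hempty.
    apply (shrink_uncovered Huncov k). exists nil. intros y Hy; exfalso; eauto. }
  set (c := fun k => refine_center (shrink k) k).
  assert (Hxc : forall k n, (S k <= n)%nat -> dY (x n) (c k) < (/2)^k)
    by (intros k n Hkn; apply shrink_center with (m := n); [exact Hkn | apply Hx]).
  assert (Hcauchy : cauchy_seq dY x).
  { intros e He. destruct (pow_half_lt_ex (e/2)) as [k Hk]; [lra|].
    exists (S k). intros m n Hm Hn.
    pose proof (Hxc k m Hm). pose proof (Hxc k n Hn).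
    pose proof (dY_triangle (x m) (c k) (x n)). rewrite (dY_sym (c k)) in H1. lra. }
  destruct (dY_complete x Hcauchy) as [y Hlim].
  destruct (U_cover y) as [i Ui]. destruct (U_open i y Ui) as [e [He Hball]].
  destruct (pow_half_lt_ex (e/3)) as [k Hk]; [lra|].
  destruct (Hlim ((/2)^k) (pow_half_pos k)) as [N HN].
  set (n := max N (S k)).
  assert (Hyn : dY (x n) y < (/2)^k) by (apply HN; lia).
  assert (Hnc : dY (x n) (c k) < (/2)^k) by (apply Hxc; lia).
  (* the whole of shrink (S k) lies within 3 * 2^-k of y, hence inside U i *)
  apply (shrink_uncovered Huncov (S k)). exists (i :: nil). intros z Hz.
  exists i; split; [left; reflexivity|]. apply Hball.
  assert (Hzc : dY z (c k) < (/2)^k) by (apply shrink_center with (m := S k); auto).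
  pose proof (dY_triangle y (x n) (c k)). pose proof (dY_triangle y (c k) z).
  rewrite (dY_sym y (x n)) in H. rewrite (dY_sym (c k) z) in H0. lra.
Qed.

End FiniteSubcover.

Lemma complete_totally_bounded_compact :
  metric_complete dY -> totally_bounded dY -> inhabited Y -> metric_compact dY.
Proof. intros Hc Htb Hinh J U; apply finite_subcover; assumption. Qed.

End MetricSpace.

Theorem corollary7p5 (L : coHeyting) (Y : Type) (dY : Y -> Y -> R) (f : L -> Y) :
  is_hausdorff_completion L Y dY f ->
  (metric_compact dY <-> forall d : nat, (0 < d)%nat -> quotient_finite L d).
Proof.
  intros [Hm [Hc [Hiso Hdense]]]. split.
  - intros Hcomp d _.
    destruct (compact_dense_net Y dY Hm L f Hdense Hcomp ((/2)^d) (pow_half_pos d))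
      as [s Hs].
    exists s. intros a. destruct (Hs (f a)) as [b [Hb Hab]].
    exists b. split; [exact Hb|]. apply dideal_of_cdist_lt. rewrite <- Hiso. exact Hab.
  - intros Hq. apply complete_totally_bounded_compact; [exact Hm | exact Hc | | exact (inhabits (f bot))].
    apply (dense_net_totally_bounded Y dY Hm L f Hdense).
    intros r Hr. destruct (pow_half_lt_ex r Hr) as [k Hk].
    destruct (Hq (S k) (Nat.lt_0_succ k)) as [s Hs].
    exists s. intros a. destruct (Hs a) as [b [Hb Hab]].
    exists b. split; [exact Hb|]. rewrite Hiso.
    pose proof (cdist_le_of_dideal L a b (S k) Hab).
    pose proof (pow_half_le k (S k) (Nat.le_succ_diag_r k)). lra.
Qed.
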